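(* For $m,n\in \mathbb{Z}_{>1}$, we have \begin{align*} \zeta(m)\zeta(n)-\zeta(m+n)=P(m,n)+P(n,m), \end{align*} where $P(m,n):=\sum^{m-1}_{i=0}(-1)^{i}\binom{n+i-1}{i}\zeta(n+i)\zeta_{\sqcup\!\sqcup}(m-i)+(-1)^{m}\sum^{n-1}_{j=0}\binom{m+j-1}{j}\bigl\{\zeta(m+j)\zeta_{\sqcup\!\sqcup}(n-j)-\zeta^{\star}(n-j,m+j)\bigr\}$, and \begin{align*} \zeta(m, n)=&\sum^{m-1}_{i=0}(-1)^{i}\binom{n+i-1}{i}\Bigl\{\zeta_{*}(n+i, m-i)+\zeta(m-i, n+i)+\zeta(m+n)\Bigr\}\\ &+(-1)^{m}\sum^{n-1}_{j=0}\binom{m+j-1}{j}\zeta_{*}(m+j, n-j). \end{align*}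
   Context: For $n\in\mathbb{Z}_{>0}$, $m\in\mathbb{Z}_{>1}$: $\zeta(m)=\sum_{k\ge1}k^{-m}$, $\zeta(n,m)=\sum_{0<k_1<k_2}k_1^{-n}k_2^{-m}$, $\zeta^\star(n,m)=\sum_{0<k_1\le k_2}k_1^{-n}k_2^{-m}=\zeta(n,m)+\zeta(m+n)$. Shuffle regularized values: for $m\in\mathbb{Z}_{>0}$, as $\epsilon\to0$, $\sum_{k>0}(1-\epsilon)^k/k^m\sim c_0+c_1(-\log\epsilon)$ and $\zeta_{\sqcup\!\sqcup}(m):=c_0+c_1T\in\mathbb{R}[T]$; so $\zeta_{\sqcup\!\sqcup}(1)=T$, $\zeta_{\sqcup\!\sqcup}(m)=\zeta(m)$ for $m>1$. Harmonic regularized values: for $m,n\in\mathbb{Z}_{>0}$, as $N\to\infty$, $\sum_{0<k_1<k_2<N}k_1^{-m}k_2^{-n}\sim b_0+b_1(\log N+\gamma)+b_2(\log N+\gamma)^2$ ($\gamma$ Euler's constant) and $\zeta_{*}(m,n):=b_0+b_1T+b_2T^2\in\mathbb{R}[T]$; $\zeta_*(m,n)=\zeta(m,n)$ when $n>1$. The identities are equalities in $\mathbb{R}[T]$. *)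

From HB Require Import structures.
From mathcomp Require Import all_boot all_order all_algebra.
From mathcomp Require Import all_classical all_reals all_analysis.
Set Implicit Arguments. Unset Strict Implicit. Unset Printing Implicit Defensive.
Import Order.TTheory GRing.Theory Num.Theory.
Import numFieldNormedType.Exports.
Local Open Scope classical_set_scope.
Local Open Scope ring_scope.

Section MZV.
Variable R : realType.

Definition zeta (m : nat) : R :=
  limn (fun N => \sum_(1 <= k < N) (k%:R ^- m : R)).

Definition zeta2 (n m : nat) : R :=
  limn (fun N => \sum_(1 <= k2 < N) \sum_(1 <= k1 < k2)
                   (k1%:R ^- n * k2%:R ^- m : R)).

Definition zetastar (n m : nat) : R := zeta2 n m + zeta (m + n).

Definition euler_gamma : R :=
  limn (fun N => \sum_(1 <= k < N.+1) (k%:R^-1 : R) - ln (N%:R)).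

(* Shuffle regularization: p = c0 + c1 T (size p <= 2) such that
   sum_{k>0} (1-eps)^k / k^m - (c0 + c1 (-log eps)) -> 0 as eps -> 0+. *)
Definition is_sh_reg (m : nat) (p : {poly R}) : Prop :=
  (size p <= 2)%N /\
  (fun eps : R => limn (fun N => \sum_(1 <= k < N) ((1 - eps) ^+ k / k%:R ^+ m))
                  - p.[- ln eps]) @ (0 : R)^'+ --> (0 : R).

Definition zeta_sh (m : nat) : {poly R} := xget 0 [set p | is_sh_reg m p].

(* Harmonic regularization: p = b0 + b1 T + b2 T^2 (size p <= 3) such that
   sum_{0<k1<k2<N} k1^{-m} k2^{-n} - p(log N + gamma) -> 0 as N -> oo. *)
Definition is_st_reg (m n : nat) (p : {poly R}) : Prop :=
  (size p <= 3)%N /\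
  (fun N : nat => \sum_(1 <= k2 < N) \sum_(1 <= k1 < k2)
                     (k1%:R ^- m * k2%:R ^- n : R)
                  - p.[ln (N%:R) + euler_gamma]) @ \oo --> (0 : R).

Definition zeta_st (m n : nat) : {poly R} := xget 0 [set p | is_st_reg m n p].

Definition Pmn (m n : nat) : {poly R} :=
  \sum_(0 <= i < m) (((-1) ^+ i * ('C(n + i - 1, i))%:R * zeta (n + i)) *: zeta_sh (m - i))
  + (-1) ^+ m *: \sum_(0 <= j < n) (('C(m + j - 1, j))%:R *:
        (zeta (m + j) *: zeta_sh (n - j) - (zetastar (n - j) (m + j))%:P)).

End MZV.

From HB Require Import structures.
From mathcomp Require Import all_boot all_order all_algebra.
From mathcomp Require Import all_classical all_reals all_analysis.
From mathcomp Require Import ring lra zify.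
Import Order.TTheory GRing.Theory Num.Theory.
Import numFieldNormedType.Exports.
Local Open Scope classical_set_scope.
Local Open Scope ring_scope.

(* Put d = l - k for 0 < k < l.  Iterating 1/(k l) = (1/k - 1/l)/d expands 1/(k^m l^n)
   into the terms 1/(k^(m-i) d^(n+i)), i < m, and 1/(l^(n-j) d^(m+j)), j < n, with
   coefficients (-1)^i C(n+i-1, i) and (-1)^m C(m+j-1, j).  Summed over k < l < N, a term
   of the first kind is a triangular sum tending to ζ(m-i) ζ(n+i), and one of the second
   kind is, after k -> l - k, a partial sum of ζ(m+j, n-j).  Only the two terms with an
   exponent 1 (i = m-1 and j = n-1) diverge; their coefficients are opposite and the
   difference of the two sums tends to ζ⋆(1, m+n-1).  This expresses ζ(m, n) through
   convergent values.
   In both identities of the theorem the divergent regularized values ζ_ш(1) and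
   ζ_∗(m+n-1, 1) occur only in these two extreme terms, where they cancel, while all the
   other regularized values are the convergent ones (by Abel's theorem for ζ_ш, and
   because a polynomial of degree at most 2 in log N + γ that tends to 0 vanishes for ζ_∗).
   With the stuffle product ζ(a) ζ(b) = ζ(a, b) + ζ(b, a) + ζ(a + b), both right-hand
   sides reduce to the expression of ζ(m, n) above. *)

Set Implicit Arguments.
Unset Strict Implicit.
Unset Printing Implicit Defensive.

Section PartialFractions.
Variables (K : comPzRingType) (d : K).

Definition pf_part (c x : K) (a b : nat) : K :=
  \sum_(0 <= i < a) c ^+ i * 'C(b + i - 1, i)%:R * x ^+ (a - i) * d ^+ (b + i).

Lemma pf_part0l c x b : pf_part c x 0 b = 0.
Proof. by rewrite /pf_part big_geq. Qed.

Lemma pf_part0r c x a : pf_part c x a.+1 0 = x ^+ a.+1.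
Proof.
rewrite /pf_part big_nat_recl // big1 => [|i _]; last first.
  by rewrite add0n subSS subn0 bin_small ?mulr0 ?mul0r.
by rewrite bin0 subn0 !expr0 mulr1 !mul1r addr0.
Qed.

Lemma pf_partS c x a b :
  pf_part c x a.+1 b.+1 = d * (pf_part c x a.+1 b + c * pf_part c x a b.+1).
Proof.
rewrite /pf_part !big_nat_recl // !mulrDr -addrA; congr (_ + _).
  by rewrite !addn0 !bin0 exprS; ring.
rewrite !mulr_sumr -big_split /=; apply: eq_bigr => i _.
rewrite !addnS !addSn !subSS !subn0 binS natrD !exprS; ring.
Qed.

Variables u v : K.
(* the model case is u = 1/k, v = 1/l and d = 1/(l - k) *)
Hypothesis duv : d * (u - v) = u * v.

Lemma partial_fractions m n : (0 < m + n)%N ->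
  u ^+ m * v ^+ n = pf_part (-1) u m n + (-1) ^+ m * pf_part 1 v n m.
Proof.
elim: m n => [|m IHm] n mn.
  by case: n mn => // n _; rewrite pf_part0l pf_part0r expr0 !mul1r add0r.
elim: n => [|n IHn] in mn *.
  by rewrite pf_part0r pf_part0l expr0 mulr0 addr0 mulr1.
have step : u ^+ m.+1 * v ^+ n.+1 = d * (u ^+ m.+1 * v ^+ n - u ^+ m * v ^+ n.+1).
  by transitivity (u ^+ m * v ^+ n * (d * (u - v))); [rewrite duv|]; rewrite !exprS; ring.
rewrite step IHn // IHm ?addnS // !pf_partS !exprS; ring.
Qed.

End PartialFractions.

Lemma binom_sum_split (K : pzRingType) (V : lmodType K) p q (F G : nat -> V) :
  \sum_(0 <= i < p.+1) ((-1) ^+ i * 'C(q.+1 + i - 1, i)%:R) *: F i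
  + (-1) ^+ p.+1 *: \sum_(0 <= j < q.+1) 'C(p.+1 + j - 1, j)%:R *: G j
  = \sum_(0 <= i < p) ((-1) ^+ i * 'C(q.+1 + i - 1, i)%:R) *: F i
  + (-1) ^+ p.+1 *: \sum_(0 <= j < q) 'C(p.+1 + j - 1, j)%:R *: G j
  + ((-1) ^+ p * 'C(p + q, p)%:R) *: (F p - G q).
Proof.
have binCpq : 'C(p.+1 + q - 1, q) = 'C(q.+1 + p - 1, p).
  by rewrite !addSn !subn1 /= -[LHS](bin_sub (leq_addl p q)) addnK addnC.
rewrite !big_nat_recr //= binCpq addSn subn1 /= addnC scalerDr scalerBr.
by rewrite !scalerA exprS mulN1r mulNr !scaleNr addrACA.
Qed.

Lemma binom_sum_splitr (K : pzRingType) p q (F G : nat -> K) :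
  \sum_(0 <= i < p.+1) ((-1) ^+ i * 'C(q.+1 + i - 1, i)%:R) * F i
  + (-1) ^+ p.+1 * \sum_(0 <= j < q.+1) 'C(p.+1 + j - 1, j)%:R * G j
  = \sum_(0 <= i < p) ((-1) ^+ i * 'C(q.+1 + i - 1, i)%:R) * F i
  + (-1) ^+ p.+1 * \sum_(0 <= j < q) 'C(p.+1 + j - 1, j)%:R * G j
  + ((-1) ^+ p * 'C(p + q, p)%:R) * (F p - G q).
Proof. exact: (binom_sum_split (V := K^o)). Qed.

Lemma cvg_sum_nat {K : numFieldType} {V : normedModType K} {T : Type}
    (F : set_system T) {FF : Filter F} m n (f : nat -> T -> V) (l : nat -> V) :
  (forall i, (m <= i < n)%N -> f i x @[x --> F] --> l i) ->
  \sum_(m <= i < n) f i x @[x --> F] --> \sum_(m <= i < n) l i.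
Proof.
move=> fl; rewrite big_nat_cond; under eq_cvg do rewrite big_nat_cond.
by apply: cvg_big => [|i /andP[/fl]]; [exact: add_continuous|].
Qed.

Section NatPowers.
Variable R : realFieldType.
Implicit Types (k l a b : nat).

Lemma ler_sum_nat_range (F : nat -> R) m n p :
  (forall i, (m <= i)%N -> 0 <= F i) -> (n <= p)%N ->
  \sum_(m <= i < n) F i <= \sum_(m <= i < p) F i.
Proof. by move=> F0; apply: (nondecreasing_series (P := xpredT)) => i /F0. Qed.

Lemma invXn_ge0 k a : 0 <= k%:R ^- a :> R.
Proof. by rewrite invr_ge0 exprn_ge0. Qed.

Lemma invXn_le k a b : (0 < k)%N -> (a <= b)%N -> k%:R ^- b <= k%:R ^- a :> R.
Proof.
move=> k0 ab; rewrite -!exprVn ler_wiXn2l // ?invr_ge0 //.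
by rewrite invf_le1 ?ler1n ?ltr0n.
Qed.

Lemma invXn_lel k l a : (0 < k)%N -> (k <= l)%N -> l%:R ^- a <= k%:R ^- a :> R.
Proof.
move=> k0 kl; rewrite lef_pV2 ?posrE ?exprn_gt0 ?ltr0n //; last exact: leq_trans kl.
by rewrite lerXn2r ?nnegrE ?ler_nat.
Qed.

End NatPowers.

Section ZetaPartialSums.
Variable R : realType.
Implicit Types (a b k l N : nat).

Lemma nondecreasing_bounded_cvgn (u : R^nat) B :
  nondecreasing_seq u -> (forall n, u n <= B) -> u @ \oo --> limn u.
Proof. by move=> nd ub; apply: nondecreasing_is_cvgn => //; exists B => _ [n _ <-]. Qed.

Definition zeta_sum a N : R := \sum_(1 <= k < N) k%:R ^- a.

Definition zeta2_sum a b N : R :=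
  \sum_(1 <= l < N) \sum_(1 <= k < l) k%:R ^- a * l%:R ^- b.

Lemma zeta_sum_ge0 a N : 0 <= zeta_sum a N.
Proof. by rewrite sumr_ge0 // => k _; apply: invXn_ge0. Qed.

Lemma zeta_sum_nd a : nondecreasing_seq (zeta_sum a).
Proof. by apply: (nondecreasing_series (P := xpredT)) => k _ _; apply: invXn_ge0. Qed.

Lemma zeta2_sum_nd a b : nondecreasing_seq (zeta2_sum a b).
Proof.
apply: (nondecreasing_series (P := xpredT)) => l _ _.
by rewrite sumr_ge0 // => k _; rewrite mulr_ge0 ?invXn_ge0.
Qed.

Lemma zeta_sum_le2 a N : (2 <= a)%N -> zeta_sum a N <= 2.
Proof.
move=> a2; apply: (@le_trans _ _ (zeta_sum 2 N)).
  by apply: ler_sum_nat => k /andP[k1 _]; apply: invXn_le.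
suff bound M : zeta_sum 2 M.+2 <= 2 - M.+1%:R^-1.
  case: N => [|[|M]]; try by rewrite /zeta_sum big_geq.
  by apply: le_trans (bound M) _; rewrite gerBl invr_ge0.
elim: M => [|M IH]; first by rewrite /zeta_sum big_nat1 expr2 mul1r invr1; lra.
rewrite /zeta_sum big_nat_recr //= -/(zeta_sum 2 M.+2).
have tele : M.+2%:R ^- 2 <= M.+1%:R^-1 - M.+2%:R^-1 :> R.
  have -> : M.+1%:R^-1 - M.+2%:R^-1 = (M.+1%:R * M.+2%:R)^-1 :> R.
    by rewrite -[M.+2%:R]natr1; field; rewrite nat1r natr1 !pnatr_eq0.
  by rewrite expr2 lef_pV2 ?posrE ?mulr_gt0 ?ltr0n // ler_pM2r ?ltr0n // ler_nat.
move: IH tele; set t := M.+2%:R ^- 2; set u := M.+1%:R^-1; set v := M.+2%:R^-1; lra.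
Qed.

Lemma cvg_zeta_sum a : (2 <= a)%N -> zeta_sum a @ \oo --> zeta R a.
Proof.
move=> a2; apply: (@nondecreasing_bounded_cvgn _ 2); first exact: zeta_sum_nd.
by move=> N; apply: zeta_sum_le2.
Qed.

Lemma zeta_sumM a b N :
  zeta_sum a N * zeta_sum b N = zeta2_sum a b N + zeta2_sum b a N + zeta_sum (a + b) N.
Proof.
elim: N => [|N IH]; first by rewrite /zeta_sum /zeta2_sum !big_geq // mul0r !addr0.
case: N IH => [|N] IH; first by rewrite /zeta_sum /zeta2_sum !big_geq // mul0r !addr0.
have zS c : zeta_sum c N.+2 = zeta_sum c N.+1 + N.+1%:R ^- c by rewrite /zeta_sum big_nat_recr.
have z2S c e : zeta2_sum c e N.+2 = zeta2_sum c e N.+1 + zeta_sum c N.+1 * N.+1%:R ^- e.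
  by rewrite /zeta2_sum big_nat_recr //= mulr_suml.
by rewrite !zS !z2S mulrDl !mulrDr IH exprD invfM; ring.
Qed.

Lemma zeta2_sum_le4 a b N : (1 <= a)%N -> (2 <= b)%N -> (4 <= a + b)%N ->
  zeta2_sum a b N <= 4.
Proof.
move=> a1 b2 ab4; set c := (a + b - 2)%N.
apply: (@le_trans _ _ (zeta2_sum c 2 N)).
  apply: ler_sum_nat => l /andP[l1 _]; apply: ler_sum_nat => k /andP[k1 /ltnW kl].
  (* as k <= l, trading l^-(b-2) for k^-(b-2) only increases the term *)
  have -> : l%:R ^- b = l%:R ^- (b - 2) * l%:R ^- 2 :> R by rewrite -invfM -exprD subnK.
  have -> : k%:R ^- c = k%:R ^- a * k%:R ^- (b - 2) :> R.
    by rewrite -invfM -exprD /c addnBA.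
  by rewrite mulrA ler_wpM2r ?invXn_ge0 // ler_wpM2l ?invXn_ge0 // invXn_lel.
apply: (@le_trans _ _ (zeta_sum c N * zeta_sum 2 N)).
  rewrite zeta_sumM -addrA lerDl addr_ge0 ?zeta_sum_ge0 //.
  by rewrite sumr_ge0 // => l _; rewrite sumr_ge0 // => k _; rewrite mulr_ge0 ?invXn_ge0.
have [c2 c0] : zeta_sum c N <= 2 /\ 0 <= zeta_sum c N.
  by split; [apply: zeta_sum_le2; lia | apply: zeta_sum_ge0].
have [t2 t0] : zeta_sum 2 N <= 2 /\ 0 <= zeta_sum 2 N.
  by split; [apply: zeta_sum_le2 | apply: zeta_sum_ge0].
nra.
Qed.

Lemma cvg_zeta2_sum a b : (1 <= a)%N -> (2 <= b)%N -> (4 <= a + b)%N ->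
  zeta2_sum a b @ \oo --> zeta2 R a b.
Proof.
move=> a1 b2 ab4; apply: (@nondecreasing_bounded_cvgn _ 4); first exact: zeta2_sum_nd.
by move=> N; apply: zeta2_sum_le4.
Qed.

Lemma zeta_stuffle a b : (2 <= a)%N -> (2 <= b)%N ->
  zeta R a * zeta R b = zeta2 R a b + zeta2 R b a + zeta R (a + b).
Proof.
move=> a2 b2.
have cvg_prod : (fun N => zeta_sum a N * zeta_sum b N) @ \oo --> zeta R a * zeta R b.
  exact: cvgM (cvg_zeta_sum a2) (cvg_zeta_sum b2).
rewrite (eq_cvg _ _ (zeta_sumM a b)) in cvg_prod.
apply: (cvg_unique _ cvg_prod) => //; apply: cvgD; first apply: cvgD.
all: apply: cvg_zeta2_sum || apply: cvg_zeta_sum; lia.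
Qed.

End ZetaPartialSums.

Section TriangleSums.
Variables (R : realType) (f : nat -> nat -> R).

Definition triangle_sum N := \sum_(1 <= l < N) \sum_(1 <= k < l) f k (l - k).

Definition square_sum M := \sum_(1 <= k < M) \sum_(1 <= d < M) f k d.

Lemma triangle_sumE N : triangle_sum N = \sum_(1 <= k < N) \sum_(1 <= d < N - k) f k d.
Proof.
elim: N => [|N IH]; first by rewrite /triangle_sum !big_geq.
case: N IH => [|N] IH; first by rewrite /triangle_sum !big_geq.
rewrite /triangle_sum big_nat_recr //= -/(triangle_sum N.+1) IH.
rewrite [RHS]big_nat_recr //= subSnn [X in _ = _ + X]big_geq // addr0 -big_split /=.
apply: eq_big_nat => k /andP[_ kN].
by rewrite (subSn (ltnW kN)) big_nat_recr // subn_gt0.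
Qed.

Hypothesis f_ge0 : forall k d, (0 < k)%N -> (0 < d)%N -> 0 <= f k d.

Lemma triangle_le_square N : triangle_sum N <= square_sum N.
Proof.
rewrite triangle_sumE; apply: ler_sum_nat => k /andP[k1 _].
by apply: ler_sum_nat_range (leq_subr _ _) => d d1; apply: f_ge0.
Qed.

Lemma square_le_triangle M N : (M + M <= N)%N -> square_sum M <= triangle_sum N.
Proof.
move=> MN; rewrite triangle_sumE.
apply: (@le_trans _ _ (\sum_(1 <= k < M) \sum_(1 <= d < N - k) f k d)).
  apply: ler_sum_nat => k /andP[k1 kM].
  by apply: ler_sum_nat_range => [d d1|]; [apply: f_ge0 | lia].
apply: ler_sum_nat_range => [k k1|]; last by lia.
by rewrite big_nat_cond sumr_ge0 // => d /andP[/andP[d1 _] _]; apply: f_ge0.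
Qed.

Lemma cvg_triangle_sum (L : R) : square_sum @ \oo --> L -> triangle_sum @ \oo --> L.
Proof.
move=> sqL; apply: (@squeeze_cvgr _ \oo _ _ (fun N => square_sum (N %/ 2)%N) square_sum).
- near=> N; rewrite triangle_le_square andbT square_le_triangle //.
  by rewrite addnn -muln2 leq_divM.
- exact: (cvg_comp _ _ (@cvg_divnr 2 isT) sqL).
- exact: sqL.
Unshelve. all: by end_near.
Qed.

End TriangleSums.

Section Zeta2Expansion.
Variable R : realType.
Implicit Types (a b k l N : nat).

Lemma cvg_triangle_zetaM a b : (2 <= a)%N -> (2 <= b)%N ->
  triangle_sum (fun k d => k%:R ^- a * d%:R ^- b : R) @ \oo --> zeta R a * zeta R b.
Proof.
move=> a2 b2; apply: cvg_triangle_sum => [k d _ _|]; first by rewrite mulr_ge0 ?invXn_ge0.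
have -> : square_sum (fun k d => k%:R ^- a * d%:R ^- b : R) =
    fun M => zeta_sum R a M * zeta_sum R b M.
  apply/funext => M; rewrite /square_sum /zeta_sum mulr_suml.
  by apply: eq_bigr => k _; rewrite mulr_sumr.
exact: cvgM (cvg_zeta_sum a2) (cvg_zeta_sum b2).
Qed.

Lemma zeta2_sum_rev a b N :
  \sum_(1 <= l < N) \sum_(1 <= k < l) (l - k)%:R ^- a * l%:R ^- b = zeta2_sum R a b N.
Proof.
apply: eq_bigr => l _; rewrite [RHS]big_nat_rev; apply: eq_big_nat => k _.
by rewrite add1n subSS.
Qed.

Lemma invXn_partial_fractions k l m n : (0 < k < l)%N -> (0 < m + n)%N ->
  k%:R ^- m * l%:R ^- n =
  \sum_(0 <= i < m)
     ((-1) ^+ i * 'C(n + i - 1, i)%:R) * (k%:R ^- (m - i) * (l - k)%:R ^- (n + i))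
  + (-1) ^+ m * \sum_(0 <= j < n)
     'C(m + j - 1, j)%:R * ((l - k)%:R ^- (m + j) * l%:R ^- (n - j)) :> R.
Proof.
move=> /andP[k0 kl] mn.
have k_neq0 : k%:R != 0 :> R by rewrite pnatr_eq0 -lt0n.
have l_neq0 : l%:R != 0 :> R by rewrite pnatr_eq0 -lt0n (ltn_trans k0 kl).
have lk_neq0 : (l - k)%:R != 0 :> R by rewrite pnatr_eq0 -lt0n subn_gt0.
have duv : (l - k)%:R^-1 * (k%:R^-1 - l%:R^-1) = k%:R^-1 * l%:R^-1 :> R.
  by rewrite natrB ?(ltnW kl) //; field; rewrite l_neq0 k_neq0 -natrB ?(ltnW kl).
rewrite -!exprVn (partial_fractions duv mn) /pf_part.
congr (_ + _ * _); apply: eq_bigr => i _.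
  by rewrite !exprVn mulrA.
by rewrite !exprVn expr1n mul1r; ring.
Qed.

Lemma zeta2_sum_pf m n N : (0 < m + n)%N ->
  zeta2_sum R m n N =
  \sum_(0 <= i < m) ((-1) ^+ i * 'C(n + i - 1, i)%:R) *
     triangle_sum (fun k d => k%:R ^- (m - i) * d%:R ^- (n + i)) N
  + (-1) ^+ m * \sum_(0 <= j < n) 'C(m + j - 1, j)%:R * zeta2_sum R (m + j) (n - j) N.
Proof.
move=> mn; rewrite {1}/zeta2_sum /triangle_sum.
under eq_bigr => l _ do under eq_big_nat => k /andP[k0 kl]
  do rewrite (invXn_partial_fractions (k := k) (l := l) _ mn) ?k0 //.
under eq_bigr => l _ do rewrite big_split /= -mulr_sumr.
rewrite big_split /= -mulr_sumr; congr (_ + _ * _).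
  under eq_bigr => l _ do rewrite exchange_big /=.
  rewrite exchange_big /=; apply: eq_bigr => i _.
  by rewrite mulr_sumr; apply: eq_bigr => l _; rewrite mulr_sumr.
under [RHS]eq_bigr => j _ do rewrite -zeta2_sum_rev.
under [RHS]eq_bigr => j _ do rewrite mulr_sumr.
rewrite [RHS]exchange_big /=; apply: eq_bigr => l _.
by rewrite exchange_big; apply: eq_bigr => j _; rewrite mulr_sumr.
Qed.

Definition harmonic_gap_sum s M : R :=
  \sum_(1 <= d < M) d%:R ^- s * \sum_(M <= k < M + d) k%:R^-1.

Lemma harmonic_telescope M d : (d < M)%N ->
  \sum_(1 <= k < M) (k%:R^-1 - (k + d)%:R^-1) =
  \sum_(1 <= k < d.+1) k%:R^-1 - \sum_(M <= k < M + d) k%:R^-1 :> R.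
Proof.
move=> dM; rewrite sumrB.
have -> : \sum_(1 <= k < M) (k + d)%:R^-1 = \sum_(d.+1 <= k < M + d) k%:R^-1 :> R.
  by rewrite -[d.+1]add1n big_addn addnK.
rewrite (big_cat_nat _ (n := d.+1)) // [X in _ - X](big_cat_nat _ (n := M)) ?leq_addr //=.
by rewrite addrKA.
Qed.

Lemma square_sum_gap s M :
  square_sum (fun k d => d%:R ^- s * (k%:R^-1 - (k + d)%:R^-1)) M =
  zeta2_sum R 1 s M + zeta_sum R (s + 1) M - harmonic_gap_sum s M.
Proof.
rewrite /square_sum exchange_big /= /zeta2_sum /zeta_sum /harmonic_gap_sum.
rewrite -big_split -sumrB /=; apply: eq_big_nat => d /andP[d1 dM].
rewrite -mulr_sumr harmonic_telescope // big_nat_recr //= mulrBr mulrDr mulr_sumr.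
congr (_ + _ - _); last by rewrite addn1 exprS invfM mulrC.
by apply: eq_bigr => k _; rewrite expr1 mulrC.
Qed.

Lemma harmonic_gap_sum_le s M : (3 <= s)%N -> harmonic_gap_sum s M <= 2 * M%:R^-1.
Proof.
move=> s3; case: M => [|M]; first by rewrite /harmonic_gap_sum big_geq // invr0 mulr0.
apply: (@le_trans _ _ (zeta_sum R s.-1 M.+1 * M.+1%:R^-1)); last first.
  by rewrite ler_wpM2r ?invr_ge0 // zeta_sum_le2 //; lia.
rewrite /harmonic_gap_sum /zeta_sum mulr_suml; apply: ler_sum_nat => d /andP[d1 _].
have inner : \sum_(M.+1 <= k < M.+1 + d) k%:R^-1 <= d%:R * M.+1%:R^-1 :> R.
  apply: (@le_trans _ _ (\sum_(M.+1 <= k < M.+1 + d) M.+1%:R^-1)).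
    by apply: ler_sum_nat => k /andP[Mk _]; rewrite lef_pV2 ?posrE ?ltr0n ?ler_nat //; lia.
  by rewrite sumr_const_nat addKn mulr_natl.
have dpow : d%:R ^- s * d%:R = d%:R ^- s.-1 :> R.
  rewrite -[in LHS](@prednK s) ?(ltn_trans _ s3) // exprS invfM mulrAC mulVf ?mul1r //.
  by rewrite pnatr_eq0 -lt0n.
by apply: le_trans (ler_wpM2l (invXn_ge0 _ _ _) inner) _; rewrite mulrA dpow.
Qed.

Lemma cvg_harmonic_gap_sum s : (3 <= s)%N -> harmonic_gap_sum s @ \oo --> 0.
Proof.
move=> s3; apply: (@squeeze_cvgr _ \oo _ _ (fun _ => 0) (fun M => 2 * M%:R^-1)).
- near=> M; rewrite harmonic_gap_sum_le // andbT sumr_ge0 // => d _.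
  by rewrite mulr_ge0 ?invXn_ge0 // sumr_ge0 // => k _; rewrite invr_ge0.
- exact: cvg_cst.
- rewrite -cvg_shiftS; have := cvgMl_tmp (a := 2) (@cvg_harmonic R); rewrite mulr0; apply.
Unshelve. all: by end_near.
Qed.

Lemma cvg_triangle_zetastar s : (3 <= s)%N ->
  (fun N => triangle_sum (fun k d => k%:R ^- 1 * d%:R ^- s) N - zeta2_sum R s 1 N)
  @ \oo --> zetastar R 1 s.
Proof.
move=> s3.
pose g k d : R := d%:R ^- s * (k%:R^-1 - (k + d)%:R^-1).
have -> : (fun N => triangle_sum (fun k d => k%:R ^- 1 * d%:R ^- s) N - zeta2_sum R s 1 N) =
    triangle_sum g.
  apply/funext => N; rewrite -zeta2_sum_rev /triangle_sum -sumrB.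
  apply: eq_big_nat => l _; rewrite -sumrB; apply: eq_big_nat => k /andP[_ kl].
  by rewrite /g subnKC ?(ltnW kl) // !expr1 mulrBr mulrC.
apply: cvg_triangle_sum => [k d k0 d0|].
  rewrite mulr_ge0 ?invXn_ge0 // subr_ge0 lef_pV2 ?posrE ?ltr0n ?ler_nat ?leq_addr //.
  by rewrite addn_gt0 k0.
rewrite (eq_cvg _ _ (square_sum_gap s)) -[zetastar _ _ _]subr0.
apply: cvgB; first apply: cvgD.
- by apply: cvg_zeta2_sum; lia.
- by apply: cvg_zeta_sum; lia.
- exact: cvg_harmonic_gap_sum.
Qed.

Lemma zeta2_expansion p q : (0 < p)%N -> (0 < q)%N ->
  zeta2 R p.+1 q.+1 =
  \sum_(0 <= i < p)
     ((-1) ^+ i * 'C(q.+1 + i - 1, i)%:R) * (zeta R (q.+1 + i) * zeta R (p.+1 - i))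
  + (-1) ^+ p.+1 * \sum_(0 <= j < q) 'C(p.+1 + j - 1, j)%:R * zeta2 R (p.+1 + j) (q.+1 - j)
  + ((-1) ^+ p * 'C(p + q, p)%:R) * zetastar R 1 (p.+1 + q).
Proof.
move=> p0 q0; apply: (@cvg_lim _ _ _ _ _ (zeta2_sum R p.+1 q.+1)) => //.
rewrite (eq_cvg _ _ (fun N => @zeta2_sum_pf p.+1 q.+1 N isT)).
have qp : (q.+1 + p = p.+1 + q)%N by rewrite !addSn addnC.
under eq_cvg do rewrite binom_sum_splitr !subSnn qp.
apply: cvgD; first apply: cvgD.
- apply: cvg_sum_nat => i /andP[_ ip].
  by rewrite (mulrC (zeta R _)); apply: cvgMl_tmp; apply: cvg_triangle_zetaM; lia.
- apply: cvgMl_tmp; apply: cvg_sum_nat => j /andP[_ jq].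
  by apply: cvgMl_tmp; apply: cvg_zeta2_sum; lia.
- by apply: cvgMl_tmp; apply: cvg_triangle_zetastar; lia.
Qed.

End Zeta2Expansion.

Section Regularization.
Variable R : realType.

Lemma cvg_subr0_trans {T : Type} (F : set_system T) {FF : Filter F} (f u v : T -> R) :
  (fun x => f x - u x) @ F --> 0 -> (fun x => f x - v x) @ F --> 0 ->
  (fun x => v x - u x) @ F --> 0.
Proof.
move=> fu fv; have -> : (fun x => v x - u x) = (fun x => (f x - u x) - (f x - v x)).
  by apply/funext => x; ring.
by rewrite -(subr0 0); apply: cvgB.
Qed.

Lemma poly_size3_arith_cvg0 (q : {poly R}) (c g : R) : c != 0 -> (size q <= 3)%N ->
  (fun j : nat => q.[j%:R * c + g]) @ \oo --> 0 -> q = 0.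
Proof.
move=> c0 sq qx0; pose x (j : nat) := j%:R * c + g.
have qE j : q.[x j] = q`_0 + q`_1 * x j + q`_2 * x j ^+ 2.
  by rewrite (horner_coef_wide _ sq) !big_ord_recr big_ord0 /= add0r expr0 expr1 mulr1.
have cst0 (a : R) : (fun _ : nat => a) @ \oo --> 0 -> a = 0.
  by move=> a0; apply: (cvg_unique _ (cvg_cst a) a0).
have qx1 : (fun j => q.[x j.+1]) @ \oo --> 0 by rewrite (cvg_shiftS (fun j => q.[x j])).
have qx2 : (fun j => q.[x j.+2]) @ \oo --> 0 by rewrite (cvg_shiftS (fun j => q.[x j.+1])).
(* the second and first differences of q along the progression are constant *)
have q2 : q`_2 = 0.
  have : (fun j => q.[x j.+2] - 2 * q.[x j.+1] + q.[x j]) @ \oo --> (0 - 2 * 0 + 0 : R).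
    exact: cvgD (cvgB qx2 (cvgMl_tmp qx1)) qx0.
  have -> : (fun j => q.[x j.+2] - 2 * q.[x j.+1] + q.[x j]) = fun _ => 2 * c ^+ 2 * q`_2.
    by apply/funext => j; rewrite !qE /x -!natr1; ring.
  rewrite mulr0 subr0 addr0 => /cst0/eqP.
  by rewrite !mulf_eq0 pnatr_eq0 (negbTE c0) /= => /eqP.
have q1 : q`_1 = 0.
  have : (fun j => q.[x j.+1] - q.[x j]) @ \oo --> (0 - 0 : R) by apply: cvgB.
  have -> : (fun j => q.[x j.+1] - q.[x j]) = fun _ => c * q`_1.
    by apply/funext => j; rewrite !qE q2 /x -!natr1; ring.
  by rewrite subr0 => /cst0/eqP; rewrite mulf_eq0 (negbTE c0) => /eqP.
have q0 : q`_0 = 0.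
  apply: cst0; have -> : (fun _ : nat => q`_0) = fun j => q.[x j].
    by apply/funext => j; rewrite qE q1 q2 !mul0r !addr0.
  exact: qx0.
apply/polyP => i; rewrite coef0.
by case: i => [|[|[|i]]] //; apply: nth_default; apply: leq_trans sq _.
Qed.

Lemma poly_ln_cvg0 (r : {poly R}) (g : R) : (size r <= 3)%N ->
  (fun N : nat => r.[ln N%:R + g]) @ \oo --> 0 -> r = 0.
Proof.
move=> sr rN; apply: (@poly_size3_arith_cvg0 r (ln 2) g) => //.
  by rewrite gt_eqF // ln_gt0 // ltr1n.
have exp2_cvg : (fun j => 2 ^ j)%N @ \oo --> \oo.
  move=> P [N _ NP]; exists N => // j /= Nj; apply: NP.
  exact: leq_trans Nj (ltnW (ltn_expl _ _)).
have e j : r.[ln (2 ^ j)%N%:R + g] = r.[j%:R * ln 2 + g].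
  by rewrite natrX lnXn // mulr_natl.
by rewrite -(eq_cvg _ _ e); apply: cvg_comp exp2_cvg rN.
Qed.

Lemma is_st_reg_uniq a b (p p' : {poly R}) :
  is_st_reg a b p -> is_st_reg a b p' -> p = p'.
Proof.
move=> [sp cp] [sp' cp']; apply/eqP; rewrite -subr_eq0; apply/eqP.
apply: (@poly_ln_cvg0 _ (euler_gamma R)).
  by rewrite (leq_trans (size_polyD _ _)) // size_polyN geq_max sp sp'.
by under eq_cvg do rewrite hornerD hornerN; exact: cvg_subr0_trans cp' cp.
Qed.

Lemma is_sh_reg_uniq k (p p' : {poly R}) :
  is_sh_reg k p -> is_sh_reg k p' -> p = p'.
Proof.
move=> [sp cp] [sp' cp']; apply/eqP; rewrite -subr_eq0; apply/eqP.
have eps0 : (fun eps : R => (p - p').[- ln eps]) @ 0^'+ --> 0.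
  by under eq_cvg do rewrite hornerD hornerN; exact: cvg_subr0_trans cp' cp.
apply: (@poly_ln_cvg0 _ 0).
  rewrite (leq_trans (size_polyD _ _)) // size_polyN geq_max.
  by rewrite (leq_trans sp) ?(leq_trans sp').
have h := (cvg_at_rightP _ 0 0).1 eps0 _ (conj (@harmonic_gt0 R) cvg_harmonic).
have e n : (p - p').[- ln (harmonic n)] = (p - p').[ln n.+1%:R + 0].
  by rewrite lnV ?posrE ?ltr0n // opprK addr0.
by rewrite (eq_cvg _ _ e) in h; rewrite -cvg_shiftS; exact: h.
Qed.

Definition polylog_sum (x : R) k N := \sum_(1 <= i < N) x ^+ i / i%:R ^+ k.

Lemma polylog_sum_le x k N : 0 <= x <= 1 -> polylog_sum x k N <= zeta_sum R k N.
Proof.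
move=> /andP[x0 x1]; apply: ler_sum_nat => i _.
by rewrite ler_piMl ?invXn_ge0 // exprn_ile1.
Qed.

Lemma polylog_sum_nd x k : 0 <= x -> nondecreasing_seq (polylog_sum x k).
Proof.
move=> x0; apply: (nondecreasing_series (P := xpredT)) => i _ _.
by rewrite mulr_ge0 ?invXn_ge0 ?exprn_ge0.
Qed.

Lemma cvg_polylog_sum x k : (2 <= k)%N -> 0 <= x <= 1 ->
  polylog_sum x k @ \oo --> limn (polylog_sum x k).
Proof.
move=> k2 /[dup] x01 /andP[x0 _].
apply: (@nondecreasing_bounded_cvgn _ _ 2 (polylog_sum_nd _ x0)) => N.
by apply: (le_trans _ (zeta_sum_le2 R N k2)); apply: polylog_sum_le.
Qed.

(* for fixed [N] the partial sum is a polynomial in [eps] *)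
Lemma cvg_polylog_sum_1 k N :
  (fun eps => polylog_sum (1 - eps) k N) @ 0^'+ --> zeta_sum R k N.
Proof.
apply: cvg_at_right_filter; apply: cvg_sum_nat => i _.
have e eps : ((1 - 'X) ^+ i).[eps] = (1 - eps) ^+ i :> R by rewrite !hornerE.
have := @continuous_horner R ((1 - 'X) ^+ i) 0.
rewrite /continuous_at (eq_cvg _ _ e) e subr0 expr1n => one_sub.
by have := cvgMr_tmp (b := i%:R ^- k) one_sub; rewrite mul1r; apply.
Qed.

Lemma abel_zeta k : (2 <= k)%N ->
  (fun eps => limn (polylog_sum (1 - eps) k)) @ 0^'+ --> zeta R k.
Proof.
move=> k2; have zeta_sum_le N : zeta_sum R k N <= zeta R k.
  exact: (nondecreasing_cvgn_le (zeta_sum_nd R k) (cvg_zeta_sum k2)).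
apply/cvgrPdist_le => e e0; have e2 : 0 < e / 2 by rewrite divr_gt0.
have [N _ /(_ N (leqnn N)) zetaN] := cvgr_dist_le _ _ (cvg_zeta_sum (R := R) k2) _ e2.
near=> eps.
have x01 : 0 <= 1 - eps <= 1.
  have eps0 : 0 < eps by near: eps; exact: nbhs_right_gt.
  have eps1 : eps < 1 by near: eps; exact: nbhs_right_lt.
  by apply/andP; split; lra.
have polyN : `|zeta_sum R k N - polylog_sum (1 - eps) k N| <= e / 2.
  by near: eps; apply: cvgr_dist_le _ _ (@cvg_polylog_sum_1 k N) _ e2.
have lim_ge : polylog_sum (1 - eps) k N <= limn (polylog_sum (1 - eps) k).
  apply: (nondecreasing_cvgn_le (polylog_sum_nd _ _) (cvg_polylog_sum k2 x01)).
  by case/andP: x01.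
have lim_le : limn (polylog_sum (1 - eps) k) <= zeta R k.
  apply: (cvgr_to_le (cvg_polylog_sum k2 x01)); near=> M.
  by apply: (le_trans _ (zeta_sum_le M)); apply: polylog_sum_le.
move: zetaN polyN; rewrite !ger0_norm ?subr_ge0 ?polylog_sum_le ?zeta_sum_le //.
lra.
Unshelve. all: by end_near.
Qed.

Lemma zeta_st_polyC a b : (1 <= a)%N -> (2 <= b)%N -> (4 <= a + b)%N ->
  zeta_st R a b = (zeta2 R a b)%:P.
Proof.
move=> a1 b2 ab4; have reg : is_st_reg a b (zeta2 R a b)%:P.
  split; first exact: leq_trans (size_polyC_leq1 _) _.
  by under eq_cvg do rewrite hornerC; apply/subr_cvg0/cvg_zeta2_sum.
by apply: (xget_unique _ reg) => p /is_st_reg_uniq; apply.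
Qed.

Lemma zeta_sh_polyC k : (2 <= k)%N -> zeta_sh R k = (zeta R k)%:P.
Proof.
move=> k2; have reg : is_sh_reg k (zeta R k)%:P.
  split; first exact: leq_trans (size_polyC_leq1 _) _.
  by under eq_cvg do rewrite hornerC; apply/subr_cvg0/abel_zeta.
by apply: (xget_unique _ reg) => p /is_sh_reg_uniq; apply.
Qed.

Lemma zeta2_binom_expansion p q (F G : nat -> {poly R}) : (0 < p)%N -> (0 < q)%N ->
  (forall i, (i < p)%N -> F i = (zeta R (q.+1 + i) * zeta R (p.+1 - i))%:P) ->
  (forall j, (j < q)%N -> G j = (zeta2 R (p.+1 + j) (q.+1 - j))%:P) ->
  F p - G q = (zetastar R 1 (p.+1 + q))%:P ->
  \sum_(0 <= i < p.+1) ((-1) ^+ i * 'C(q.+1 + i - 1, i)%:R) *: F i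
  + (-1) ^+ p.+1 *: \sum_(0 <= j < q.+1) 'C(p.+1 + j - 1, j)%:R *: G j
  = (zeta2 R p.+1 q.+1)%:P.
Proof.
move=> p0 q0 FE GE top; rewrite binom_sum_split top zeta2_expansion // !polyCD.
congr (_ + _ + _); last by rewrite -polyCD scale_polyC.
  rewrite rmorph_sum; apply: eq_big_nat => i /andP[_ ip].
  by rewrite FE // scale_polyC.
rewrite -scale_polyC rmorph_sum; congr (_ *: _); apply: eq_big_nat => j /andP[_ jq].
by rewrite GE // scale_polyC.
Qed.

Lemma Pmn_polyC p q : (0 < p)%N -> (0 < q)%N -> Pmn R p.+1 q.+1 = (zeta2 R p.+1 q.+1)%:P.
Proof.
move=> p0 q0; rewrite /Pmn; under eq_bigr => i _ do rewrite -scalerA.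
apply: zeta2_binom_expansion => // [i ip | j jq |].
- by rewrite zeta_sh_polyC ?scale_polyC //; lia.
- rewrite zeta_sh_polyC; last by lia.
  rewrite scale_polyC -polyCB /zetastar zeta_stuffle; try lia.
  by rewrite -[X in X - _]addrA addrK.
- by rewrite !subSnn (addnC q.+1) addnS -addSn subKr.
Qed.

End Regularization.

Theorem theorem2p4 (R : realType) (m n : nat) (hm : (1 < m)%N) (hn : (1 < n)%N) :
  ((zeta R m * zeta R n - zeta R (m + n))%:P = Pmn R m n + Pmn R n m)
  /\
  ((zeta2 R m n)%:P =
     \sum_(0 <= i < m) ((-1) ^+ i * ('C(n + i - 1, i))%:R) *:
        (zeta_st R (n + i) (m - i) + (zeta2 R (m - i) (n + i))%:P + (zeta R (m + n))%:P)
     + (-1) ^+ m *: \sum_(0 <= j < n) ('C(m + j - 1, j))%:R *: zeta_st R (m + j) (n - j)).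
Proof.
case: m hm => [|p] //; rewrite ltnS => p0.
case: n hn => [|q] //; rewrite ltnS => q0.
split; first by rewrite !Pmn_polyC // zeta_stuffle // addrK polyCD.
symmetry; apply: zeta2_binom_expansion => // [i ip | j jq |].
- rewrite zeta_st_polyC; try lia.
  by rewrite -!polyCD zeta_stuffle; try lia; congr (_ + zeta R _)%:P; lia.
- by rewrite zeta_st_polyC //; lia.
- rewrite !subSnn (addnC q.+1) addnS -addSn addrAC [X in X + _]addrAC subrr add0r.
  by rewrite -polyCD /zetastar addn1 addnS.
Qed.
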